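(* Let $q$ be an odd prime power, $n=2^v$ with $v\ge1$, $s$ an odd integer and $t$ an integer with $qt\equiv t\pmod{2^v}$. If Type-I duadic splittings of $\mathbb{Z}_{2^v}$ given by $\rho_{s,t}$ exist, then Type-I duadic splittings of $\mathbb{Z}_{2^v}$ given by $\tau_t=\rho_{1,t}$ exist.
   Context: $\mu_q:\mathbb{Z}_n\to\mathbb{Z}_n$, $i\mapsto qi\bmod n$; $P$ is $\mu_q$-invariant if $\mu_q(P)=P$. $\rho_{s,t}:\mathbb{Z}_n\to\mathbb{Z}_n$, $i\mapsto s(i+t)\bmod n$; $\tau_t(i)=i+t\bmod n$. Type-I duadic splittings of $\mathbb{Z}_n$ given by $\rho_{s,t}$ exist if there is a $\mu_q$-invariant $P$ with $\mathbb{Z}_n=P\cup\rho_{s,t}(P)$ a disjoint union. *)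

From HB Require Import structures.
From mathcomp Require Import all_boot all_order all_algebra.
Set Implicit Arguments. Unset Strict Implicit. Unset Printing Implicit Defensive.
Import GRing.Theory.
Local Open Scope ring_scope.

(* Z_n is represented by 'Z_n (valid here since n = 2^v >= 2). *)

Definition mu (n q : nat) (i : 'Z_n) : 'Z_n := q%:R * i.

Definition rho (n : nat) (s t : int) (i : 'Z_n) : 'Z_n := s%:~R * (i + t%:~R).

Definition tau (n : nat) (t : int) (i : 'Z_n) : 'Z_n := i + t%:~R.

Definition typeI_duadic_exists (n q : nat) (f : 'Z_n -> 'Z_n) : Prop :=
  exists P : {set 'Z_n},
    [/\ mu q @: P = P, [disjoint P & f @: P] & P :|: f @: P = setT].

Definition prime_power (q : nat) : Prop :=
  exists p k : nat, [/\ prime p, (0 < k)%N & q = (p ^ k)%N].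

Arguments mu n q i : clear implicits.
Arguments rho n s t i : clear implicits.
Arguments tau n t i : clear implicits.
Arguments typeI_duadic_exists n q f : clear implicits.

From mathcomp Require Import all_boot all_order all_algebra.
From mathcomp Require Import ring zify.
Set Implicit Arguments. Unset Strict Implicit. Unset Printing Implicit Defensive.
Import GRing.Theory.

(* A splitting by rho_{s,t} forces rho_{s,t} to have no fixed point and to
   differ from mu_q everywhere.  Writing x = s y, this says that the congruences
   (1 - s) y = t and (q - s) y = t have no solution in Z_{2^v}, so 2g divides
   1 - s, q - s and 2^v, where g = gcd(t, 2^v).  Hence q = 1 and t = g modulo 2g,
   and the residues i with i mod 2g < g form a mu_q-invariant set that tau_t
   exchanges with its complement. *)

Section Splittings.

Variables (T : finType) (P : {set T}).

Lemma imset_eq_mono (g : T -> T) : injective g ->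
  g @: P = P <-> forall x, (g x \in P) = (x \in P).
Proof.
move=> g_inj; split=> [gP x | gP]; first by rewrite -{1}gP mem_imset.
apply/eqP; rewrite eqEcard card_imset // leqnn andbT.
by apply/subsetP=> _ /imsetP[x xP ->]; rewrite gP.
Qed.

Lemma splitting_flip (f : T -> T) : injective f ->
  [disjoint P & f @: P] /\ P :|: f @: P = setT <->
  forall x, (f x \in P) = (x \notin P).
Proof.
move=> f_inj; split=> [[dis cov] x | fP].
  case xP: (x \in P); first by apply: (disjointFl dis); rewrite mem_imset.
  have: f x \in P :|: f @: P by rewrite cov inE.
  by rewrite in_setU mem_imset // xP orbF.
split.
  rewrite disjoint_subset; apply/subsetP=> y yP; rewrite inE /=.
  by apply/imsetP=> -[x xP yE]; move: yP; rewrite yE fP xP.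
apply/setP=> y; rewrite in_setU in_setT; case yP: (y \in P) => //=.
have [h hK Kh] := injF_bij f_inj.
by apply/imsetP; exists (h y); rewrite ?Kh // -[_ \in P]negbK -fP Kh yP.
Qed.

Lemma splitting_neq (g f : T -> T) : injective g -> injective f ->
  [/\ g @: P = P, [disjoint P & f @: P] & P :|: f @: P = setT] ->
  forall x, f x != g x.
Proof.
move=> g_inj f_inj [/(imset_eq_mono g_inj) gP dis cov] x.
have fP := (splitting_flip f_inj).1 (conj dis cov) x.
by apply/eqP=> fg; move: fP; rewrite fg gP; case: (x \in P).
Qed.

End Splittings.

Lemma modn_add_half (r g : nat) :
  r < 2 * g -> ((r + g) %% (2 * g) < g) = (g <= r).
Proof.
move=> r_lt; case: (leqP g r) => [g_le | r_lt_g].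
  by rewrite -[r](subnK g_le) -addnA addnn -mul2n modnDr modn_small; lia.
by rewrite modn_small; lia.
Qed.

Lemma pfactor_ndvd_gcd (p v d m : nat) : prime p ->
  d %| p ^ v -> ~~ (d %| m) -> p * gcdn m (p ^ v) %| d.
Proof.
move=> p_prime /(dvdn_pfactor _ _ p_prime)[a _ ->] d_ndvd.
have /(dvdn_pfactor _ _ p_prime)[b _ gE] := dvdn_gcdr m (p ^ v).
have p_gt1 := prime_gt1 p_prime.
rewrite gE -expnS dvdn_Pexp2l // ltnNge; apply: contra d_ndvd => a_le_b.
by rewrite (dvdn_trans _ (dvdn_gcdl m (p ^ v))) // gE dvdn_Pexp2l.
Qed.

Lemma modn_double_gcd (m n : nat) :
  2 * gcdn m n %| n -> m %% (2 * gcdn m n) = gcdn m n.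
Proof.
set g := gcdn m n => g2_dvdn.
have [w mE] := dvdnP (dvdn_gcdl m n); rewrite -/g in mE.
have [g0 | g_gt0] := posnP g; first by rewrite mE g0 muln0.
case/boolP: (odd w) => [w_odd | w_even].
  rewrite mE -[w]odd_double_half w_odd -mul2n mulnDl mul1n addnC mulnAC.
  by rewrite [_ * w./2]mulnC modnMDl modn_small //; lia.
suff: 2 * g %| g by move/dvdn_leq; lia.
rewrite dvdn_gcd g2_dvdn andbT mE -[w]odd_double_half (negbTE w_even).
by rewrite add0n -mul2n mulnAC dvdn_mulr.
Qed.

Local Open Scope ring_scope.

Section ZpArith.

Variable N : nat.
Hypothesis N_gt1 : (1 < N)%N.

Lemma Zp_int_unit (s : int) : coprime N `|s| -> (s%:~R : 'Z_N) \is a GRing.unit.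
Proof.
move=> s_coprime; rewrite [s]intEsign rmorphM /= unitrM.
by rewrite rmorphXn rmorphN1 unitrX ?unitrN1 //= -pmulrn unitZpE.
Qed.

Lemma Zp_int_mul_solvable (a : int) (k : nat) :
  (gcdn `|a| N %| k)%N -> exists y : 'Z_N, a%:~R * y = k%:R.
Proof.
move=> /dvdnP[m ->]; have [u [w uwE]] := Bezoutz a N.
have N0 : (N%:~R : 'Z_N) = 0 by rewrite -pmulrn pchar_Zp.
exists (u * m)%:~R.
have := congr1 (fun z : int => (z * m)%:~R : 'Z_N) uwE.
rewrite /= !rmorphM rmorphD !rmorphM /= N0 mulr0 addr0 => /esym gcdE.
by rewrite mulrA [a%:~R * _]mulrC -gcdE mulrC -!pmulrn.
Qed.

Lemma rho_neq_scale_ndvd (s t : int) (c : nat) :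
  (forall x : 'Z_N, rho N s t x != c%:R * x) ->
  ~~ (gcdn `|c%:Z - s| N %| (t%:~R : 'Z_N))%N.
Proof.
move=> rho_neq; apply/negP=> /Zp_int_mul_solvable[y yE].
move/eqP: (rho_neq (s%:~R * y)); apply.
by rewrite /rho -[t%:~R]natr_Zp -yE rmorphB /= -pmulrn; ring.
Qed.

Section HalfBlocks.

Variable g : nat.
Hypothesis g2_dvdN : (2 * g %| N)%N.

Definition half_blocks : {set 'Z_N} := [set i : 'Z_N | (i %% (2 * g) < g)%N].

Lemma half_blocks_natr (n : nat) : (n%:R \in half_blocks) = (n %% (2 * g) < g)%N.
Proof. by rewrite inE val_Zp_nat // modn_dvdm. Qed.

Lemma half_blocks_mulr (q : nat) : q = 1 %[mod 2 * g] ->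
  forall i, (q%:R * i \in half_blocks) = (i \in half_blocks).
Proof.
move=> qE i; rewrite -[i in q%:R * i]natr_Zp -natrM half_blocks_natr.
by rewrite -modnMml qE modnMml mul1n inE.
Qed.

Lemma half_blocks_addr (k : nat) : (k %% (2 * g) = g)%N ->
  forall i, (i + k%:R \in half_blocks) = (i \notin half_blocks).
Proof.
have g_gt0 : (0 < g)%N.
  by rewrite lt0n; apply: contraTneq g2_dvdN => ->; rewrite dvd0n; lia.
move=> kE i; rewrite -[i in i + _]natr_Zp -natrD half_blocks_natr -modnDm kE.
by rewrite modn_add_half ?ltn_pmod ?muln_gt0 // inE -leqNgt.
Qed.

Lemma half_blocks_splitting (q : nat) (t : int) :
  coprime N q -> q = 1 %[mod 2 * g] -> ((t%:~R : 'Z_N) %% (2 * g) = g)%N ->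
  typeI_duadic_exists N q (rho N 1 t).
Proof.
move=> q_coprime qE tE; exists half_blocks.
have mu_inj : injective (mu N q) by apply/mulrI; rewrite unitZpE.
have rho_inj : injective (rho N 1 t) by move=> x y; rewrite /rho !mul1r => /addIr.
have [dis cov] : [disjoint half_blocks & rho N 1 t @: half_blocks] /\
    half_blocks :|: rho N 1 t @: half_blocks = setT.
  apply/(splitting_flip _ rho_inj)=> i.
  by rewrite /rho mul1r -[t%:~R]natr_Zp half_blocks_addr.
by split=> //; apply/(imset_eq_mono _ mu_inj)=> i; rewrite half_blocks_mulr.
Qed.

End HalfBlocks.

End ZpArith.

Lemma eqn_mod_of_dvdz (d a b : nat) (s : int) :
  (d %| `|a%:Z - s|)%N -> (d %| `|b%:Z - s|)%N -> a = b %[mod d].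
Proof.
move=> da db; apply/eqP; rewrite -eqz_nat -!modz_nat eqz_mod_dvd.
have -> : a%:Z - b%:Z = (a%:Z - s) - (b%:Z - s) by ring.
by apply: rpredB; rewrite dvdzE.
Qed.

Theorem lemma3p7 (q v : nat) (s t : int) :
  prime_power q -> odd q -> (1 <= v)%N -> odd `|s|%N ->
  (q%:Z * t = t %[mod (2 ^ v)%N%:Z])%Z ->
  typeI_duadic_exists (2 ^ v) q (rho (2 ^ v) s t) ->
  typeI_duadic_exists (2 ^ v) q (rho (2 ^ v) 1 t).
Proof.
move=> _ q_odd v_gt0 s_odd _ [P splitP].
set N := (2 ^ v)%N.
have N_gt1 : (1 < N)%N by rewrite -{1}(expn0 2) ltn_exp2l.
have N_coprime n : odd n -> coprime N n by rewrite coprime_pexpl // coprime2n.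
have mu_inj : injective (mu N q) by apply/mulrI; rewrite unitZpE // N_coprime.
have rho_inj : injective (rho N s t).
  by move=> x y /(mulrI (Zp_int_unit N_gt1 (N_coprime _ s_odd))) /addIr.
have rho_neq_id x : rho N s t x != 1%:R * x.
  rewrite mul1r; apply: (@splitting_neq _ P id) => //.
  by case: splitP; rewrite imset_id.
have rho_neq_mu := splitting_neq mu_inj rho_inj splitP.
set g := gcdn (t%:~R : 'Z_N) N.
have [g2_dvd1s g2_dvdqs] :
    (2 * g %| gcdn `|1%:Z - s| N)%N /\ (2 * g %| gcdn `|q%:Z - s| N)%N.
  by split; apply: pfactor_ndvd_gcd (dvdn_gcdr _ _) (rho_neq_scale_ndvd _ _).
have g2_dvdN := dvdn_trans g2_dvd1s (dvdn_gcdr _ _).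
apply: (half_blocks_splitting N_gt1 g2_dvdN).
- exact: N_coprime.
- exact: eqn_mod_of_dvdz (dvdn_trans g2_dvdqs (dvdn_gcdl _ _))
                         (dvdn_trans g2_dvd1s (dvdn_gcdl _ _)).
- exact: modn_double_gcd.
Qed.
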